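(* Let $G=(V,E,C,\ell)$ be an edge-labeled hypergraph with exactly two categories $C=\{c_1,c_2\}$. Construct a directed graph $G'=(V',E')$ with unit arc capacities as follows. $V'$ consists of $V$, two terminal nodes $s$ and $t$, and one new auxiliary node $u_e$ for each hyperedge $e\in E$. For each hyperedge $e=\{v_1,\dots,v_r\}\in E$: if $\ell(e)=c_1$, add the arcs $(s,u_e),(u_e,v_1),\dots,(u_e,v_r)$; if $\ell(e)=c_2$, add the arcs $(u_e,t),(v_1,u_e),\dots,(v_r,u_e)$. Let $S^*\subseteq V'$ with $s\in S^*$, $t\notin S^*$ be a minimum $s$-$t$ cut, i.e. a set minimizing the number of arcs $(a,b)\in E'$ with $a\in S^*$, $b\notin S^*$ among all subsets of $V'$ containing $s$ and not $t$. Define $Y:V\to C$ by $Y[i]=c_1$ if $i\in S^*$ and $Y[i]=c_2$ if $i\notin S^*$. Then $Y$ minimizes $\mathrm{CatEdgeClus}$ over all clusterings $V\to C$.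
   Context: An edge-labeled hypergraph $G=(V,E,C,\ell)$ consists of a finite node set $V$, a finite collection $E$ of hyperedges (nonempty subsets of $V$), a finite set $C$ of categories, and a labeling $\ell:E\to C$. A clustering is a map $Y:V\to C$. For $e\in E$, $m_Y(e)=1$ if $Y[i]\neq\ell(e)$ for some $i\in e$, and $m_Y(e)=0$ otherwise. The Categorical Edge Clustering objective is $\mathrm{CatEdgeClus}(Y)=\sum_{e\in E}m_Y(e)$. *)

From mathcomp Require Import all_boot.
Set Implicit Arguments. Unset Strict Implicit. Unset Printing Implicit Defensive.

(* An edge-labeled hypergraph: nodes V (finType), hyperedges indexed by a
   finType I (so E may contain repeated hyperedges), edge e : {set V},
   categories C (finType), labeling lab : I -> C. *)

Section Hypergraph.
Variables (V I C : finType) (edge : I -> {set V}) (lab : I -> C).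

Definition mistake (Y : V -> C) (e : I) : nat :=
  [exists i in edge e, Y i != lab e].

Definition CatEdgeClus (Y : V -> C) : nat := \sum_(e : I) mistake Y e.

(* Node set of the auxiliary directed graph G':
   inl (inl v) = original node v, inl (inr e) = auxiliary node u_e,
   inr true = terminal s, inr false = terminal t. *)
Definition node : finType := ((V + I) + bool)%type.
Definition vnode (v : V) : node := inl (inl v).
Definition anode (e : I) : node := inl (inr e).
Definition src : node := inr true.
Definition snk : node := inr false.

Variables (c1 c2 : C).

Definition arc (a b : node) : bool :=
  match a, b with
  | inr true, inl (inr e) => lab e == c1                        (* (s, u_e) *)
  | inl (inr e), inl (inl v) => (lab e == c1) && (v \in edge e) (* (u_e, v) *)
  | inl (inr e), inr false => lab e == c2                       (* (u_e, t) *)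
  | inl (inl v), inl (inr e) => (lab e == c2) && (v \in edge e) (* (v, u_e) *)
  | _, _ => false
  end.

Definition cut_value (S : {set node}) : nat :=
  #|[set p : node * node | arc p.1 p.2 && (p.1 \in S) && (p.2 \notin S)]|.

Definition is_min_st_cut (S : {set node}) : Prop :=
  [/\ src \in S, snk \notin S &
      forall S' : {set node}, src \in S' -> snk \notin S' ->
        cut_value S <= cut_value S'].

Definition cut_clustering (S : {set node}) (v : V) : C :=
  if vnode v \in S then c1 else c2.

End Hypergraph.

From Pilot Require Import Defs.
From mathcomp Require Import all_boot.
Set Implicit Arguments. Unset Strict Implicit. Unset Printing Implicit Defensive.

(* Every arc of G' has exactly one auxiliary endpoint u_e, so the value of a
   cut is the sum over the hyperedges e of the number of cut arcs in the
   gadget of e.  If the clustering read off an s-t cut makes a mistake on e,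
   the gadget of e contains a cut arc: the terminal arc of u_e or the arc
   between u_e and a misplaced node.  Conversely, a clustering Y induces the
   cut placing each node v on the side of Y v, and each u_e on the side of the
   terminal of its label exactly when Y makes no mistake on e; that cut only
   cuts the terminal arcs of the mistaken hyperedges.  Hence
   CatEdgeClus (Y_S* ) <= cut S* <= cut S_Y <= CatEdgeClus Y. *)

Lemma big_option (R : Type) (idx : R) (op : Monoid.com_law idx) (T : finType)
    (F : option T -> R) :
  \big[op/idx]_(o : option T) F o = op (F None) (\big[op/idx]_(t : T) F (Some t)).
Proof.
rewrite (bigD1 None) //= (reindex_omap Some id) => [|[t|] //].
by under eq_bigl do rewrite eqxx.
Qed.

Section CutGadgets.

Variables (V I C : finType) (edge : I -> {set V}) (lab : I -> C) (c1 c2 : C).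

Local Notation node := (node V I).
Local Notation vnode := (vnode I).
Local Notation anode := (anode V).
Local Notation src := (src V I).
Local Notation snk := (snk V I).
Local Notation arc := (Defs.arc edge lab c1 c2).
Local Notation cut_value := (cut_value edge lab c1 c2).
Local Notation mistake := (mistake edge lab).

Definition cut_arcs (S : {set node}) : {set node * node} :=
  [set p | arc p.1 p.2 && (p.1 \in S) && (p.2 \notin S)].

Definition arc_owner (p : node * node) : option I :=
  match p with
  | (inl (inr e), _) | (_, inl (inr e)) => Some e
  | _ => None
  end.

Definition gadget_cut (S : {set node}) (e : I) : {set node * node} :=
  [set p in cut_arcs S | arc_owner p == Some e].

Lemma arc_owner_arc (a b : node) : arc a b -> arc_owner (a, b) != None.
Proof. by case: a b => [[v|e]|[]] [[w|f]|[]]. Qed.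

Lemma cut_value_gadget_sum (S : {set node}) :
  cut_value S = \sum_(e : I) #|gadget_cut S e|.
Proof.
rewrite /cut_value -sum1_card (partition_big arc_owner xpredT) //= big_option.
rewrite big_pred0 => [|[a b]]; last first.
  rewrite !inE /=; apply/negP => /andP[/andP[/andP[/arc_owner_arc owned _] _]].
  exact/negP.
rewrite Monoid.mul1m.
by apply: eq_bigr => e _; rewrite -sum1_card; apply: eq_bigl => p; rewrite !inE.
Qed.

Variant gadget_arc_spec (e : I) : node * node -> Prop :=
  | SrcArc of lab e = c1 : gadget_arc_spec e (src, anode e)
  | OutArc v of lab e = c1 & v \in edge e : gadget_arc_spec e (anode e, vnode v)
  | SnkArc of lab e = c2 : gadget_arc_spec e (anode e, snk)
  | InArc v of lab e = c2 & v \in edge e : gadget_arc_spec e (vnode v, anode e).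

Lemma gadget_arcP (e : I) (p : node * node) :
  arc p.1 p.2 -> arc_owner p = Some e -> gadget_arc_spec e p.
Proof.
case: p => [[[v|f]|[]] [[w|f']|[]]] //= p_arc [<-] //; move: p_arc.
- by case/andP => /eqP; exact: InArc.
- by case/andP => /eqP; exact: OutArc.
- by move/eqP; exact: SnkArc.
- by move/eqP; exact: SrcArc.
Qed.

Section CutToClustering.

Hypothesis C2 : forall c : C, c = c1 \/ c = c2.

Lemma mistake_le_gadget_cut (S : {set node}) (e : I) :
  src \in S -> snk \notin S ->
  mistake (cut_clustering c1 c2 S) e <= #|gadget_cut S e|.
Proof.
move=> src_in snk_out; rewrite /mistake /cut_clustering.
case: existsP => [[v /andP[ve wrong]]|_] //=.
rewrite card_gt0; apply/set0Pn; move: wrong.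
case: (C2 (lab e)) => le; rewrite le.
- case: ifP => [_|v_out _]; first by rewrite eqxx.
  case e_in: (anode e \in S).
  + by exists (anode e, vnode v); rewrite !inE /= le ve e_in v_out !eqxx.
  + by exists (src, anode e); rewrite !inE /= le src_in e_in !eqxx.
- case: ifP => [v_in _|_]; last by rewrite eqxx.
  case e_in: (anode e \in S).
  + by exists (anode e, snk); rewrite !inE /= le e_in snk_out !eqxx.
  + by exists (vnode v, anode e); rewrite !inE /= le ve v_in e_in !eqxx.
Qed.

Lemma CatEdgeClus_cut_clustering_le (S : {set node}) :
  src \in S -> snk \notin S ->
  CatEdgeClus edge lab (cut_clustering c1 c2 S) <= cut_value S.
Proof.
move=> src_in snk_out; rewrite cut_value_gadget_sum.
by apply: leq_sum => e _; exact: mistake_le_gadget_cut.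
Qed.

End CutToClustering.

Section ClusteringToCut.

Hypothesis c12 : c1 != c2.

Lemma mistake0P (Y : V -> C) (e : I) :
  reflect (forall v, v \in edge e -> Y v = lab e) (mistake Y e == 0).
Proof.
rewrite eqb0; apply: (iffP existsPn) => [agree v ve | agree v].
  by apply/eqP; move: (agree v); rewrite ve negbK.
by apply/negP => /andP[/agree ->]; rewrite eqxx.
Qed.

Definition clustering_cut (Y : V -> C) : {set node} :=
  [set x : node | match x with
                  | inl (inl v) => Y v == c1
                  | inl (inr e) => (mistake Y e == 0) == (lab e == c1)
                  | inr b => b
                  end].

Definition terminal_arc (e : I) : node * node :=
  if lab e == c1 then (src, anode e) else (anode e, snk).

Lemma gadget_cut_clustering_cut (Y : V -> C) (e : I) (p : node * node) :
  p \in gadget_cut (clustering_cut Y) e -> 0 < mistake Y e /\ p = terminal_arc e.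
Proof.
have c21 : (c2 == c1) = false by rewrite eq_sym (negbTE c12).
rewrite !inE => /andP[/andP[/andP[p_arc p1_in] p2_out] /eqP owner].
case: (gadget_arcP p_arc owner) p1_in p2_out => [le|v le ve|le|v le ve];
  rewrite /terminal_arc /= le ?c21 ?eqxx ?eqb_id ?eqbF_neg ?negbK -?lt0n //.
- by move=> /mistake0P/(_ v ve)->; rewrite le eqxx.
- by move=> /eqP Yv /mistake0P/(_ v ve)/esym; rewrite Yv le => /eqP; rewrite c21.
Qed.

Lemma card_gadget_cut_clustering_cut (Y : V -> C) (e : I) :
  #|gadget_cut (clustering_cut Y) e| <= mistake Y e.
Proof.
have [->|[p /gadget_cut_clustering_cut[mistake_pos _]]] :=
  set_0Vmem (gadget_cut (clustering_cut Y) e); first by rewrite cards0.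
apply: leq_trans mistake_pos; rewrite -(cards1 (terminal_arc e)).
by apply/subset_leq_card/subsetP => q /gadget_cut_clustering_cut[_ ->]; rewrite set11.
Qed.

Lemma cut_value_clustering_cut_le (Y : V -> C) :
  cut_value (clustering_cut Y) <= CatEdgeClus edge lab Y.
Proof.
rewrite cut_value_gadget_sum.
by apply: leq_sum => e _; exact: card_gadget_cut_clustering_cut.
Qed.

End ClusteringToCut.

End CutGadgets.

Theorem mainTheorem2 (V I C : finType) (edge : I -> {set V}) (lab : I -> C)
    (c1 c2 : C)
    (edge_nonempty : forall e : I, edge e != set0)
    (c12 : c1 != c2) (C2 : forall c : C, c = c1 \/ c = c2)
    (Sstar : {set node V I})
    (Hmin : is_min_st_cut edge lab c1 c2 Sstar) :
  forall Y : V -> C,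
    CatEdgeClus edge lab (cut_clustering c1 c2 Sstar) <=
    CatEdgeClus edge lab Y.
Proof.
move=> Y; case: Hmin => src_in snk_out Sstar_min.
apply: leq_trans (CatEdgeClus_cut_clustering_le edge lab C2 src_in snk_out) _.
apply: leq_trans (cut_value_clustering_cut_le edge lab c12 Y).
by apply: Sstar_min; rewrite inE.
Qed.
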